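(* Consider the all-but-one private sequencing scheme described in the context, with $M\ge 2$ unknown individuals, $K$ known individuals, $S=M$ sequencers, constant coverage depth $\alpha\in\mathbb{N}$ and per-read error probability $\eta\in(0,1)$, $\eta\neq 1/2$. Let $\epsilon\in(0,1)$. If $$\frac{\alpha}{M+K-1}\;\ge\;\frac{8\eta(1-\eta)}{(1-2\eta)^2}\,\ln\!\left(\frac{2^M}{\epsilon}\right),$$ then the reconstruction condition holds: the data collector's estimate $\hat{\mathbf{x}}_n$ satisfies $\mathbb{P}(\hat{\mathbf{x}}_n\neq\mathbf{x}_n)\le\epsilon$ for every SNP position $n\in[N]$.
   Context: Setting. There are $M$ unknown individuals and $K$ known individuals, $N$ SNP positions, and $S=M$ non-colluding sequencers. The genome of unknown individual $m$ at SNP position $n$ is $X_{m,n}\in\{-1,1\}$ (major allele $=1$, minor $=-1$), and $\mathbf{x}_n=(X_{1,n},\dots,X_{M,n})^T$. The known individuals' alleles $y_{k,n}\in\{-1,1\}$ are known to the data collector. In the all-but-one scheme, sequencer $s$ receives (pooled, untagged) DNA fragments of all unknown individuals except individual $s$ and of all $K$ known individuals; each fragment contains exactly one SNP and is correctly mapped to its position; each individual $m\neq s$ and each known individual has exactly $\alpha$ fragments covering each SNP position at sequencer $s$ (constant coverage depth $\alpha$). Each sequencer reads every allele in every fragment independently with error probability $\eta$ (flipping $1\leftrightarrow-1$) and reports the reads to the data collector. Model of the data collector's observations used by the paper: after scaling the sum of reads at position $n$ from sequencer $s$ by $1/(\alpha(1-2\eta))$ and subtracting $\sum_k y_{k,n}$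 (with the Gaussian/central-limit approximation of the read noise), the data collector observes $$\mathbf{g}_n=\mathbf{H}\mathbf{x}_n+\mathbf{z}_n,\qquad \mathbf{H}=\mathbf{1}_{M\times M}-\mathbf{I}_{M\times M},$$ where $\mathbf{1}$ is the all-ones matrix, $\mathbf{z}_n\sim\mathcal{N}(0,\sigma^2\mathbf{I})$ is independent of $\mathbf{x}_n$, and $\sigma^2=\frac{4(M+K-1)}{\alpha}\frac{\eta(1-\eta)}{(1-2\eta)^2}$. The data collector estimates $\hat{\mathbf{x}}_n=\arg\min_{\mathbf{u}\in\{-1,1\}^M}\|\mathbf{g}_n-\mathbf{H}\mathbf{u}\|_2$. *)

From HB Require Import structures.
From mathcomp Require Import all_boot all_order all_algebra.
From mathcomp Require Import all_classical all_reals all_analysis.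
Set Implicit Arguments. Unset Strict Implicit. Unset Printing Implicit Defensive.
Import Order.TTheory GRing.Theory Num.Theory.
Local Open Scope classical_set_scope.
Local Open Scope ring_scope.

Definition allbutone_H (R : realType) (M : nat) : 'M[R]_M :=
  \matrix_(i, j) (if i == j then 0 else 1).

Definition pm1_vec (R : realType) (M : nat) (u : 'cV[R]_M) : Prop :=
  forall i, u i 0 = 1 \/ u i 0 = -1.

Definition sqnorm (R : realType) (M : nat) (v : 'cV[R]_M) : R :=
  \sum_i (v i 0) ^+ 2.

Definition noise_var (R : realType) (M K alpha : nat) (eta : R) : R :=
  4 * (M + K - 1)%:R / alpha%:R * (eta * (1 - eta) / (1 - 2 * eta) ^+ 2).

Definition mutually_independent d (T : measurableType d) (R : realType)
  (P : probability T R) (M : nat) (Z : 'I_M -> T -> R) : Prop :=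
  forall (J : {set 'I_M}) (B : 'I_M -> set R),
    (forall i, measurable (B i)) ->
    P (\bigcap_(i in [set` J]) (Z i @^-1` B i)) =
    (\prod_(i in J) P (Z i @^-1` B i))%E.

Definition observation d (T : measurableType d) (R : realType) (M : nat)
  (x : 'cV[R]_M) (Z : 'I_M -> T -> R) (w : T) : 'cV[R]_M :=
  allbutone_H R M *m x + \col_i Z i w.

(* Error event of the ML (minimum-distance) estimator over {-1,1}^M:
   some u <> x in {-1,1}^M is at least as close to g as H x is
   (i.e. the estimate may differ from x, whatever the tie-breaking). *)
Definition ml_error_event d (T : measurableType d) (R : realType) (M : nat)
  (x : 'cV[R]_M) (Z : 'I_M -> T -> R) : set T :=
  [set w | exists u : 'cV[R]_M, pm1_vec u /\ u <> x /\
     sqnorm (observation x Z w - allbutone_H R M *m u)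
       <= sqnorm (observation x Z w - allbutone_H R M *m x)].

From HB Require Import structures.
From mathcomp Require Import all_boot all_order all_algebra.
From mathcomp Require Import all_classical all_reals all_analysis.
From mathcomp Require Import ring lra zify measurable_realfun.
Import Order.TTheory GRing.Theory Num.Theory.
Local Open Scope classical_set_scope.
Local Open Scope ring_scope.

(* If the minimum-distance decoder can err, some u <> x in {-1,1}^M satisfies
   ||z + H (x - u)|| <= ||z||.  For M >= 2 the matrix H is invertible and x - u has
   entries in {0, 2, -2}, so H (x - u) is a nonzero vector with even integer entries;
   this is impossible when every |z_i| < 1.  Hence the error event lies in the union of
   the events |z_i| >= 1, each of probability at most 2 exp(-1 / (2 sigma^2)) by comparing
   the centred Gaussian density with the ones centred at 1 and -1.  The coverage
   hypothesis says exactly that ln (2^M / eps) <= 1 / (2 sigma^2), and 2 M <= 2^M closes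
   the union bound. *)

Section GaussianTail.
Context {R : realType}.

Lemma normal_pdf0_le_shift (s m x : R) : s != 0 -> m ^+ 2 <= m * x ->
  normal_pdf 0 s x <= expR (- m ^+ 2 / (s ^+ 2 *+ 2)) * normal_pdf m s x.
Proof.
move=> s0 mx; rewrite /normal_pdf (negbTE s0) /normal_fun.
rewrite mulrCA ler_pM2l ?normal_peak_gt0 // -expRD ler_expR.
have s2_gt0 : 0 < s ^+ 2 *+ 2 by rewrite pmulrn_lgt0 // lt_def sqrf_eq0 s0 sqr_ge0.
rewrite !mulNr -opprD -mulrDl lerN2 ler_pM2r ?invr_gt0 // subr0; nra.
Qed.

Lemma measurable_le_fun (a : R) (f : R -> R) :
  measurable_fun setT f -> measurable [set r | a <= f r].
Proof.
move=> /(_ measurableT _ (measurable_itv `[a, +oo[%R)); rewrite setTI.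
by congr measurable; apply/seteqP; split => r /=; rewrite in_itv /= andbT.
Qed.

Lemma measurable_le_mul (a m : R) : measurable [set r : R | a <= m * r].
Proof. by apply: measurable_le_fun; exact: measurable_funM. Qed.

Lemma normal_prob0_tail (s m : R) : s != 0 ->
  (normal_prob 0 s [set r | (m ^+ 2 <= m * r)%R] <=
   (expR (- m ^+ 2 / (s ^+ 2 *+ 2)))%:E)%E.
Proof.
move=> s0; set c := expR _; rewrite /normal_prob.
have mpdf (m' : R) : measurable_fun [set r | m ^+ 2 <= m * r] (EFin \o normal_pdf m' s).
  by apply/measurable_EFinP; apply: measurable_funTS; exact: measurable_normal_pdf.
apply: (@le_trans _ _ (\int[lebesgue_measure]_(x in [set r | (m ^+ 2 <= m * r)%R])
   (c%:E * (normal_pdf m s x)%:E))%E).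
  apply: ge0_le_integral.
  - exact: measurable_le_mul.
  - by move=> x _; rewrite lee_fin normal_pdf_ge0.
  - exact: mpdf.
  - by apply: emeasurable_funM => //; exact: mpdf.
  - by move=> x /= mx; rewrite -EFinM lee_fin normal_pdf0_le_shift.
rewrite ge0_integralZl_EFin ?expR_ge0 //; last 3 first.
- exact: measurable_le_mul.
- by move=> x _; rewrite lee_fin normal_pdf_ge0.
- exact: mpdf.
rewrite -[leRHS]mule1 lee_pmul2l ?lte_fin ?expR_gt0 //.
apply: (@probability_le1 _ _ _ (normal_prob m s)); exact: measurable_le_mul.
Qed.

Lemma normal_prob0_abs_ge {s t : R} : s != 0 -> 0 < t ->
  (normal_prob 0 s [set r | (t <= `|r|)%R] <=
   (expR (- t ^+ 2 / (s ^+ 2 *+ 2)) *+ 2)%:E)%E.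
Proof.
move=> s0 t0.
have -> : [set r | t <= `|r|] =
    [set r | t ^+ 2 <= t * r] `|` [set r | (- t) ^+ 2 <= - t * r].
  apply/seteqP; split => r /=; rewrite sqrrN mulNr expr2 ?ler_pM2l // -mulrN ler_pM2l //;
    by rewrite ler_normr => /orP.
apply: le_trans (measureU2 (normal_prob 0 s) (measurable_le_mul _ _)
  (measurable_le_mul _ _)) _.
rewrite mulr2n EFinD; apply: leeD; first exact: normal_prob0_tail.
by rewrite -[t ^+ 2]sqrrN; exact: normal_prob0_tail.
Qed.

End GaussianTail.

Lemma pm1_half_sub_int (R : archiRealFieldType) (a b : R) :
  (a = 1 \/ a = -1) -> (b = 1 \/ b = -1) -> (a - b) / 2 \is a Num.int.
Proof.
move=> [->|->] [->|->].
- by have -> : ((1 : R) - 1) / 2 = 0 by lra.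
- by have -> : ((1 : R) - -1) / 2 = 1 by lra.
- have -> : ((-1 : R) - 1) / 2 = -1 by lra.
  by rewrite rpredN rpred1.
- by have -> : ((-1 : R) - -1) / 2 = 0 by lra.
Qed.

Lemma sqr_lt_sqr_add_even (R : archiRealFieldType) (a z : R) :
  a / 2 \is a Num.int -> a != 0 -> `|z| < 1 -> z ^+ 2 < (a + z) ^+ 2.
Proof.
move=> a_even a0 z_lt1.
have a_ge2 : 2 <= `|a|.
  have a2_neq0 : a / 2 != 0 by rewrite mulf_neq0 ?invr_eq0 ?pnatr_eq0.
  have := norm_intr_ge1 a_even a2_neq0.
  by rewrite normrM normfV normr_nat; lra.
have az_ge : - (`|a| * `|z|) <= a * z by rewrite lerNl -normrM -normrN ler_norm.
have a2 : a ^+ 2 = `|a| ^+ 2 by rewrite real_normK ?num_real.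
rewrite -subr_gt0 (_ : _ - _ = a ^+ 2 + 2 * (a * z)); last by ring.
rewrite a2; nra.
Qed.

Section AllButOne.
Context {R : realType} {M : nat}.
Local Notation H := (allbutone_H R M).

Lemma allbutone_H_mulE (v : 'cV[R]_M) i : (H *m v) i 0 = \sum_j v j 0 - v i 0.
Proof.
rewrite mxE (bigD1 i) // [in RHS](bigD1 i) //= !mxE eqxx mul0r add0r addrAC subrr add0r.
by apply: eq_bigr => j ji; rewrite mxE eq_sym (negbTE ji) mul1r.
Qed.

Lemma allbutone_H_mul_eq0 (v : 'cV[R]_M) : (2 <= M)%N -> H *m v = 0 -> v = 0.
Proof.
move=> M2 Hv0; set S := \sum_j v j 0.
have vE i : v i 0 = S.
  by apply/eqP; rewrite eq_sym -subr_eq0 -allbutone_H_mulE Hv0 mxE.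
have SM : S = S *+ M.
  by rewrite {1}/S (eq_bigr (fun=> S)) ?sumr_const ?card_ord // => j _; exact: vE.
have S0 : S = 0.
  have : S *+ M.-1.+1 = S + 0 by rewrite prednK ?(ltnW M2) // -SM addr0.
  by rewrite mulrS => /addrI /eqP; rewrite mulrn_eq0 eqn0Ngt ltn_predRL M2 => /eqP.
by apply/matrixP => i j; rewrite (ord1 j) vE S0 mxE.
Qed.

Lemma allbutone_H_mul_sub_half_int (x u : 'cV[R]_M) i :
  pm1_vec x -> pm1_vec u -> (H *m (x - u)) i 0 / 2 \is a Num.int.
Proof.
move=> px pu; rewrite allbutone_H_mulE mulrBl mulr_suml.
by apply: rpredB; [apply: rpred_sum => j _|]; rewrite !mxE; exact: pm1_half_sub_int.
Qed.

Lemma ml_decoding_error_noise_ge1 (x u z : 'cV[R]_M) :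
  (2 <= M)%N -> pm1_vec x -> pm1_vec u -> u != x ->
  sqnorm (z + H *m (x - u)) <= sqnorm z -> exists i, 1 <= `|z i 0|.
Proof.
move=> M2 px pu ux; apply: contraPP => /forallNP z_lt1.
have {}z_lt1 i : `|z i 0| < 1 by rewrite ltNge; apply/negP/z_lt1.
set a := H *m (x - u); have a_even i : a i 0 / 2 \is a Num.int.
  exact: allbutone_H_mul_sub_half_int.
have [i0 ai0] : exists i, a i 0 != 0.
  apply: contraPP ux => /forallNP a0; apply/negP; rewrite negbK eq_sym -subr_eq0.
  apply/eqP/(allbutone_H_mul_eq0 _ M2)/matrixP => i j.
  by have /negP := a0 i; rewrite negbK (ord1 j) [RHS]mxE => /eqP.
apply/negP; rewrite -ltNge /sqnorm (bigD1 i0) // [ltRHS](bigD1 i0) //= mxE.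
apply: ltr_leD; first by rewrite addrC; exact: sqr_lt_sqr_add_even.
apply: ler_sum => i _; rewrite mxE addrC.
have [->|ai] := eqVneq (a i 0) 0; first by rewrite add0r.
exact/ltW/sqr_lt_sqr_add_even.
Qed.

End AllButOne.

Lemma content_le_sum_ord {d} {T : semiRingOfSetsType d} {R : realFieldType}
    (mu : {content set T -> \bar R}) {n} {A : set T} {G : 'I_n -> set T} :
  measurable A -> (forall i, measurable (G i)) -> A `<=` \bigcup_i G i ->
  (mu A <= \sum_(i < n) mu (G i))%E.
Proof.
move=> mA mG AG; pose F k := if insub k is Some i then G i else set0.
have FE (i : 'I_n) : F i = G i by rewrite /F valK.
rewrite -(eq_bigr _ (fun i _ => congr1 mu (FE i))).
apply: content_subadditive => // [k _|w /AG [i _ Giw]].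
  by rewrite /F; case: insub => [i|]; [exact: mG | exact: measurable0].
by apply: (bigsetU_sup (ltn_ord i)); rewrite FE.
Qed.

Lemma finite_pm1_vec (R : realType) M : finite_set [set u : 'cV[R]_M | pm1_vec u].
Proof.
pose f (b : 'cV[bool]_M) : 'cV[R]_M := \col_i (if b i 0 then 1 else -1).
apply: (sub_finite_set _ (finite_image f (@finite_finset _ setT))) => u pu.
exists (\col_i (u i 0 == 1)) => //; apply/matrixP => i j.
by rewrite (ord1 j) !mxE; case: (pu i) => ->; rewrite ?eqxx // lt_eqF // ltrN10.
Qed.

Section Observation.
Context {d : measure_display} {T : measurableType d} {R : realType} {M : nat}.
Variables (x : 'cV[R]_M) (Z : 'I_M -> T -> R).
Hypothesis mZ : forall i, measurable_fun setT (Z i).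
Local Notation H := (allbutone_H R M).

Lemma observation_subE u w : observation x Z w - H *m u = \col_i Z i w + H *m (x - u).
Proof. by rewrite /observation mulmxBr addrAC addrC. Qed.

Lemma measurable_sqnorm_observation u :
  measurable_fun setT (fun w => sqnorm (observation x Z w - H *m u)).
Proof.
rewrite /sqnorm; apply: measurable_sum => i.
under eq_fun do rewrite observation_subE !mxE.
by apply/measurable_funX/measurable_funD.
Qed.

Lemma measurable_ml_error_event : measurable (ml_error_event x Z).
Proof.
have -> : ml_error_event x Z = \bigcup_(u in [set u | pm1_vec u /\ u <> x])
    [set w | sqnorm (observation x Z w - H *m u) <= sqnorm (observation x Z w - H *m x)].
  by apply/seteqP; split => w /= => [[u [pu [ux le]]]|[u [pu ux] le]]; exists u.
apply: fin_bigcup_measurable => [|u _].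
  by apply: sub_finite_set (finite_pm1_vec R M) => u [].
have := measurable_fun_ler (measurable_sqnorm_observation u)
  (measurable_sqnorm_observation x) measurableT (Y := [set true]) I.
by rewrite setTI.
Qed.

Lemma ml_error_event_sub : (2 <= M)%N -> pm1_vec x ->
  ml_error_event x Z `<=` \bigcup_i (Z i @^-1` [set r | 1 <= `|r|]).
Proof.
move=> M2 px w [u [pu [ux]]]; rewrite !observation_subE subrr mulmx0 addr0 => le.
have [i] := ml_decoding_error_noise_ge1 x u _ M2 px pu (introN eqP ux) le.
by rewrite mxE => ?; exists i.
Qed.

End Observation.

Lemma double_leq_exp2 n : (2 * n <= 2 ^ n)%N.
Proof.
by elim: n => [|[|n] IH] //; rewrite expnS; have := IH; have := expn_gt0 2 n.+1; lia.
Qed.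

Lemma ler_double_mulrn {R : numDomainType} (e : R) n : 0 <= e -> e *+ 2 *+ n <= e * 2 ^+ n.
Proof.
move=> e0; rewrite -mulrnA -[e *+ _]mulr_natr; apply: ler_wpM2l => //.
by rewrite -natrX ler_nat double_leq_exp2.
Qed.

Section NoiseVariance.
Context {R : realType} {M K alpha : nat}.

(* No side conditions: if a denominator vanishes, both sides are 0 since x / 0 = 0. *)
Lemma inv_noise_var2E (eta : R) :
  (noise_var M K alpha eta *+ 2)^-1 =
  alpha%:R / (M + K - 1)%:R / (8 * eta * (1 - eta) / (1 - 2 * eta) ^+ 2).
Proof.
rewrite /noise_var -[_ *+ 2]mulr_natr (_ : 8 = 4 * 2 :> R); last by rewrite -natrM.
by rewrite !(invfM, invrK); ring.
Qed.

Lemma coverage_le_inv_noise_var2 {eta L : R} :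
  0 < eta < 1 -> eta != 1 / 2 ->
  8 * eta * (1 - eta) / (1 - 2 * eta) ^+ 2 * L <= alpha%:R / (M + K - 1)%:R ->
  L <= (noise_var M K alpha eta *+ 2)^-1.
Proof.
move=> /andP[eta_gt0 eta_lt1] eta_neq hcov.
have r_neq0 : 1 - 2 * eta != 0 by apply: contraNneq eta_neq => h; apply/eqP; lra.
have coef_gt0 : 0 < 8 * eta * (1 - eta) / (1 - 2 * eta) ^+ 2.
  by rewrite divr_gt0 ?exprn_even_gt0 ?r_neq0 ?orbT //; nra.
by rewrite inv_noise_var2E ler_pdivlMr // mulrC.
Qed.

Lemma union_tail_le (v eps : R) : 0 < eps ->
  ln (2 ^+ M / eps) <= (v *+ 2)^-1 -> expR (- 1 / (v *+ 2)) *+ 2 *+ M <= eps.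
Proof.
move=> eps_gt0 le_inv; apply: le_trans (ler_double_mulrn _ _ (expR_ge0 _)) _.
rewrite -ler_pdivlMr ?exprn_gt0 // mulN1r -[eps / _]invf_div.
rewrite -(@lnK _ (2 ^+ M / eps)) ?posrE ?divr_gt0 ?exprn_gt0 //.
by rewrite -expRN ler_expR lerN2.
Qed.

End NoiseVariance.

Theorem theorem1 (R : realType) (M K N alpha : nat) (eta eps : R)
  (d : measure_display) (T : measurableType d) (P : probability T R)
  (x : 'I_N -> 'cV[R]_M) (Z : 'I_N -> 'I_M -> T -> R) :
  (2 <= M)%N ->
  0 < eta < 1 -> eta != 1 / 2 ->
  0 < eps < 1 ->
  (forall n, pm1_vec (x n)) ->
  (forall n i, measurable_fun setT (Z n i)) ->
  (forall n i (A : set R), measurable A ->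
     P (Z n i @^-1` A) = normal_prob 0 (Num.sqrt (noise_var M K alpha eta)) A) ->
  (forall n, mutually_independent P (Z n)) ->
  alpha%:R / (M + K - 1)%:R >=
    8 * eta * (1 - eta) / (1 - 2 * eta) ^+ 2 * ln (2 ^+ M / eps) ->
  forall n : 'I_N, (P (ml_error_event (x n) (Z n)) <= eps%:E)%E.
Proof.
move=> M2 heta eta_neq /andP[eps_gt0 eps_lt1] px mZ hZ _ hcov n.
set v := noise_var M K alpha eta in hZ.
have L_gt0 : 0 < ln (2 ^+ M / eps).
  rewrite ln_gt0 // ltr_pdivlMr // mul1r (lt_trans eps_lt1) //.
  by rewrite exprn_egt1 ?ltr1n // -lt0n ltnW.
have L_le := coverage_le_inv_noise_var2 heta eta_neq hcov.
have v_gt0 : 0 < v by have := lt_le_trans L_gt0 L_le; rewrite invr_gt0 pmulrn_lgt0.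
have mA : measurable [set r : R | 1 <= `|r|].
  by apply: measurable_le_fun; exact: normr_measurable.
have tail i : (P (Z n i @^-1` [set r | (1 <= `|r|)%R]) <= (expR (- 1 / (v *+ 2)) *+ 2)%:E)%E.
  have s_gt0 : 0 < Num.sqrt v by rewrite sqrtr_gt0.
  rewrite hZ //; have := normal_prob0_abs_ge (lt0r_neq0 s_gt0) ltr01.
  by rewrite sqr_sqrtr ?expr1n // ltW.
have mZA i : measurable (Z n i @^-1` [set r | (1 <= `|r|)%R]).
  by rewrite -[_ @^-1` _]setTI; exact: mZ.
apply: le_trans (content_le_sum_ord P (measurable_ml_error_event (x n) (Z n) (mZ n))
  mZA (ml_error_event_sub (x n) (Z n) M2 (px n))) _.
apply: (@le_trans _ _ (\sum_(i < M) (expR (- 1 / (v *+ 2)) *+ 2)%:E)%E).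
  by apply: lee_sum => i _; exact: tail.
by rewrite sumEFin lee_fin sumr_const card_ord union_tail_le.
Qed.
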